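(* Let $0<\mu<1/4$ and $\kappa\in\mathbb{R}$. Let $f(x)=(1+\mu\cos x)^{-2}$, $g(y)=y^2(1-y^2)$, and let $K$ be the Gaussian curvature of the metric $(f(x)+g(y))(dx^2+dy^2)$ on $\mathbb{R}\times[-1,1]$. Let $\gamma(s)=\tfrac12\operatorname{sech}s$, and consider the curve $y(x)=\gamma(\kappa+x+\mu\sin x)$. Define $$I(x):=K_x(x,y(x))\,g(y(x))-K_y(x,y(x))\,f(x)\,y'(x)$$ and, for $L>0$, $$B_L(\kappa):=\int_{-\infty}^{-L}I(x)\,dx+\int_{L}^{\infty}I(x)\,dx .$$ Then $$|B_L(\kappa)|\le 1200\,(1+2e^{2|\kappa|})\,\gamma(L)^2 .$$
   Context: $K_x,K_y$ are the partial derivatives of $K$ in $x$ and $y$. The curve $y=\gamma(\kappa+x+\mu\sin x)$ is a geodesic of this metric lying on the homoclinic connection of the closed geodesic $\{y=0\}$. *)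

From Stdlib Require Import Reals.
From Coquelicot Require Import Coquelicot.
Open Scope R_scope.

Definition fcoef (mu x : R) : R := / (1 + mu * cos x) ^ 2.
Definition gcoef (y : R) : R := y ^ 2 * (1 - y ^ 2).

(* conformal factor lambda = f + g of the metric lambda (dx^2 + dy^2) *)
Definition lam (mu x y : R) : R := fcoef mu x + gcoef y.

(* Gaussian curvature of lambda (dx^2+dy^2):
   K = - (1 / (2 lambda)) * Laplacian (ln lambda) *)
Definition Kcurv (mu x y : R) : R :=
  - / (2 * lam mu x y) *
    (Derive (fun t => Derive (fun s => ln (lam mu s y)) t) x
     + Derive (fun t => Derive (fun s => ln (lam mu x s)) t) y).

Definition Kx (mu x y : R) : R := Derive (fun t => Kcurv mu t y) x.
Definition Ky (mu x y : R) : R := Derive (fun t => Kcurv mu x t) y.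

Definition sech (s : R) : R := 2 / (exp s + exp (- s)).
Definition gam (s : R) : R := / 2 * sech s.

Definition ycurve (mu kappa x : R) : R := gam (kappa + x + mu * sin x).

Definition Iint (mu kappa x : R) : R :=
  Kx mu x (ycurve mu kappa x) * gcoef (ycurve mu kappa x)
  - Ky mu x (ycurve mu kappa x) * fcoef mu x * Derive (ycurve mu kappa) x.

(* The integrand is estimated pointwise, with no cancellation.  Along the strip the
   curvature and its partial derivatives are explicit rational expressions in sin x,
   cos x and y; for 0 < y <= 1/2 they give |K_x| <= 66 and |K_y| <= 122 y, and with
   |g(y)| <= y^2, f <= 16/9 and |y'| <= (5/4) y this yields |I(x)| <= 340 y(x)^2.
   Since gamma(s) <= e^(-|s|) and the phase kappa + x + mu sin x differs from x by at
   most |kappa| + 1/4, |I(x)| <= 595 e^(2|kappa|) e^(-2|x|).  Each tail integral then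
   converges and is at most (595/2) e^(2|kappa|) e^(-2L), and e^(-L) <= 2 gamma(L). *)

From Stdlib Require Import Reals Lra.
From Coquelicot Require Import Coquelicot.
Open Scope R_scope.

Lemma is_RInt_gen_p_infty_of_tail_bound (f h : R -> R) (L : R) :
  (forall x, continuous f x) -> is_lim h p_infty 0 ->
  (forall a b, L <= a <= b -> Rabs (RInt f a b) <= h a) ->
  exists l, is_RInt_gen f (at_point L) (Rbar_locally p_infty) l /\ Rabs l <= h L.
Proof.
  intros Hf Hh Htail.
  assert (Hex : forall a b, ex_RInt f a b).
  { intros a b; apply (ex_RInt_continuous (V := R_CompleteNormedModule)); auto. }
  set (F := fun b => RInt f L b).
  assert (Hdiff : forall u v, L <= u -> L <= v -> Rabs (F v - F u) <= h (Rmin u v)).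
  { intros u v Hu Hv.
    assert (Hd : F v - F u = RInt f u v).
    { unfold F; rewrite <- (RInt_Chasles f L u v) by auto; unfold plus; simpl; ring. }
    rewrite Hd.
    destruct (Rle_dec u v) as [Huv | Huv].
    - rewrite Rmin_left by lra; apply Htail; lra.
    - rewrite Rmin_right, <- opp_RInt_swap by (auto; lra).
      unfold opp; simpl; rewrite Rabs_Ropp; apply Htail; lra. }
  assert (Hcv : exists l, filterlim F (Rbar_locally p_infty) (locally l)).
  { apply (filterlim_locally_cauchy (F := Rbar_locally p_infty)); intros eps.
    destruct (Hh (ball 0 eps) (locally_ball 0 eps)) as [N HN].
    exists (fun b => Rmax L N < b); split; [now exists (Rmax L N) |].
    intros u v Hu Hv.
    assert (HL := Rmax_l L N); assert (HN' := Rmax_r L N).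
    assert (Hsmall : Rabs (h (Rmin u v) - 0) < eps).
    { apply HN; apply Rmin_case; lra. }
    change (Rabs (F v - F u) < eps).
    eapply Rle_lt_trans; [apply Hdiff; lra |].
    rewrite Rminus_0_r in Hsmall; eapply Rle_lt_trans; [apply Rle_abs | exact Hsmall]. }
  destruct Hcv as [l Hl]; exists l; split.
  - intros P HP.
    apply (Filter_prod _ _ _ (fun a => a = L) (fun b => P (F b))); [easy | now apply Hl |].
    intros a b Ha Hb; simpl; subst a; exists (F b); split; [| exact Hb].
    apply (RInt_correct (V := R_CompleteNormedModule)), Hex.
  - assert (Hbound : Rbar_locally p_infty (fun b => -h L <= F b /\ F b <= h L)).
    { exists L; intros b Hb; apply Rabs_le_between, Htail; lra. }
    apply Rabs_le, (closed_filterlim_loc F (fun y : R => -h L <= y <= h L) l Hl Hbound).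
    apply closed_and; [apply closed_ge | apply closed_le].
Qed.

Lemma is_RInt_exp_decay (M c a b : R) : c <> 0 ->
  is_RInt (fun t => M * exp (- (c * t))) a b (M / c * (exp (- (c * a)) - exp (- (c * b)))).
Proof.
  intros Hc.
  replace (M / c * (exp (- (c * a)) - exp (- (c * b)))) with
    (minus (- M / c * exp (- (c * b))) (- M / c * exp (- (c * a))))
    by (unfold minus, plus, opp; simpl; field; exact Hc).
  apply (is_RInt_derive (fun t => - M / c * exp (- (c * t)))).
  - intros x _; auto_derive; [easy | field; exact Hc].
  - intros x _; apply (ex_derive_continuous (V := R_NormedModule)); auto_derive; easy.
Qed.

Lemma Rabs_RInt_le_exp_decay (f : R -> R) (M c L a b : R) : 0 < c ->
  (forall x, continuous f x) ->
  (forall x, L <= x -> Rabs (f x) <= M * exp (- (c * x))) -> L <= a <= b ->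
  Rabs (RInt f a b) <= M / c * exp (- (c * a)).
Proof.
  intros Hc Hf Hdecay Hab.
  assert (HM : 0 <= M).
  { assert (H := Hdecay L (Rle_refl L)).
    apply Rmult_le_reg_r with (exp (- (c * L))); [apply exp_pos |].
    rewrite Rmult_0_l; eapply Rle_trans; [apply Rabs_pos | exact H]. }
  assert (Hexp := is_RInt_exp_decay M c a b ltac:(lra)).
  assert (Hex : ex_RInt f a b).
  { apply (ex_RInt_continuous (V := R_CompleteNormedModule)); auto. }
  eapply Rle_trans; [apply abs_RInt_le; [lra | exact Hex] |].
  eapply Rle_trans.
  - apply RInt_le; [lra | | eexists; exact Hexp |].
    + apply (ex_RInt_continuous (V := R_CompleteNormedModule)).
      intros x _; apply continuous_comp; [apply Hf | apply continuous_Rabs].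
    + intros x Hx; apply Hdecay; lra.
  - rewrite (is_RInt_unique _ _ _ _ Hexp).
    assert (0 < exp (- (c * b))) by apply exp_pos.
    assert (0 <= M / c) by (apply Rdiv_le_0_compat; lra).
    nra.
Qed.

Lemma is_lim_exp_decay (M c : R) : 0 < c -> is_lim (fun a => M * exp (- (c * a))) p_infty 0.
Proof.
  intros Hc.
  replace (Finite 0) with (Rbar_mult M 0) by (simpl; f_equal; ring).
  apply is_lim_scal_l.
  apply (is_lim_comp exp (fun a => - (c * a)) p_infty 0 m_infty); [apply is_lim_exp_m | |].
  - change m_infty with (Rbar_opp p_infty); apply is_lim_opp.
    replace p_infty with (Rbar_mult c p_infty) at 2.
    + apply is_lim_scal_l, is_lim_id.
    + unfold Rbar_mult, Rbar_mult'; destruct (Rle_dec 0 c) as [H | H]; [| exfalso; lra].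
      destruct (Rle_lt_or_eq_dec 0 c H); [reflexivity | exfalso; lra].
  - exists 0; intros x _; easy.
Qed.

Lemma is_RInt_gen_p_infty_exp_decay (f : R -> R) (M c L : R) : 0 < c ->
  (forall x, continuous f x) ->
  (forall x, L <= x -> Rabs (f x) <= M * exp (- (c * x))) ->
  exists l, is_RInt_gen f (at_point L) (Rbar_locally p_infty) l /\
            Rabs l <= M / c * exp (- (c * L)).
Proof.
  intros Hc Hf Hdecay.
  apply (is_RInt_gen_p_infty_of_tail_bound f (fun a => M / c * exp (- (c * a))));
    [exact Hf | apply is_lim_exp_decay, Hc |].
  intros a b Hab; apply (Rabs_RInt_le_exp_decay f M c L); auto.
Qed.

Lemma is_RInt_gen_m_infty_of_reflection (f : R -> R) (U l : R) :
  is_RInt_gen (fun x => f (- x)) (at_point (- U)) (Rbar_locally p_infty) l ->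
  is_RInt_gen f (Rbar_locally m_infty) (at_point U) l.
Proof.
  intros H P HP.
  destruct (H P HP) as [Q S HQ [N HN] Hprod].
  apply (Filter_prod _ _ _ (fun a => a < - N) (fun b => b = U)); [now exists (- N) | easy |].
  intros a b Ha Hb; simpl; subst b.
  destruct (Hprod (- U) (- a) HQ (HN (- a) ltac:(lra))) as [y [Hy HPy]].
  exists y; split; [| exact HPy].
  apply is_RInt_comp_opp, is_RInt_swap, (is_RInt_opp (V := R_NormedModule)) in Hy.
  rewrite opp_opp in Hy.
  refine (is_RInt_ext _ _ _ _ _ _ Hy); intros t _.
  rewrite opp_opp, Ropp_involutive; reflexivity.
Qed.

Definition fbase (mu x : R) : R := 1 + mu * cos x.

Definition fcoef1 (mu x : R) : R := 2 * mu * sin x * (/ fbase mu x) ^ 3.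
Definition fcoef2 (mu x : R) : R :=
  2 * mu * cos x * (/ fbase mu x) ^ 3 + 6 * mu ^ 2 * sin x ^ 2 * (/ fbase mu x) ^ 4.
Definition fcoef3 (mu x : R) : R :=
  - 2 * mu * sin x * (/ fbase mu x) ^ 3 + 18 * mu ^ 2 * sin x * cos x * (/ fbase mu x) ^ 4
  + 24 * mu ^ 3 * sin x ^ 3 * (/ fbase mu x) ^ 5.

Definition gcoef1 (y : R) : R := 2 * y - 4 * y ^ 3.
Definition gcoef2 (y : R) : R := 2 - 12 * y ^ 2.
Definition gcoef3 (y : R) : R := - 24 * y.

Definition Kclosed (mu x y : R) : R :=
  - (fcoef2 mu x + gcoef2 y) * / 2 * (/ lam mu x y) ^ 2
  + (fcoef1 mu x ^ 2 + gcoef1 y ^ 2) * / 2 * (/ lam mu x y) ^ 3.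
Definition Kxclosed (mu x y : R) : R :=
  - fcoef3 mu x * / 2 * (/ lam mu x y) ^ 2
  + (fcoef2 mu x + gcoef2 y) * fcoef1 mu x * (/ lam mu x y) ^ 3
  + fcoef1 mu x * fcoef2 mu x * (/ lam mu x y) ^ 3
  - 3 / 2 * (fcoef1 mu x ^ 2 + gcoef1 y ^ 2) * fcoef1 mu x * (/ lam mu x y) ^ 4.
Definition Kyclosed (mu x y : R) : R :=
  - gcoef3 y * / 2 * (/ lam mu x y) ^ 2
  + (fcoef2 mu x + gcoef2 y) * gcoef1 y * (/ lam mu x y) ^ 3
  + gcoef1 y * gcoef2 y * (/ lam mu x y) ^ 3
  - 3 / 2 * (fcoef1 mu x ^ 2 + gcoef1 y ^ 2) * gcoef1 y * (/ lam mu x y) ^ 4.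

Ltac nonzero :=
  repeat split; repeat (apply Rmult_integral_contrapositive_currified || apply pow_nonzero);
  try lra.

Lemma is_derive_gcoef (y : R) : is_derive gcoef y (gcoef1 y).
Proof. unfold gcoef, gcoef1; auto_derive; [easy | ring]. Qed.
Lemma is_derive_gcoef1 (y : R) : is_derive gcoef1 y (gcoef2 y).
Proof. unfold gcoef1, gcoef2; auto_derive; [easy | ring]. Qed.
Lemma is_derive_gcoef2 (y : R) : is_derive gcoef2 y (gcoef3 y).
Proof. unfold gcoef2, gcoef3; auto_derive; [easy | ring]. Qed.

Lemma gcoef_ge0 (y : R) : -1 <= y <= 1 -> 0 <= gcoef y.
Proof. intros Hy; unfold gcoef; apply Rmult_le_pos; [apply pow2_ge_0 | simpl; nra]. Qed.

Lemma fbase_bounds (mu x : R) : - / 4 <= mu <= / 4 -> 3 / 4 <= fbase mu x <= 5 / 4.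
Proof. intros Hmu; unfold fbase; assert (Hc := COS_bound x); split; nra. Qed.

Lemma is_derive_fcoef (mu x : R) : - / 4 <= mu <= / 4 -> is_derive (fcoef mu) x (fcoef1 mu x).
Proof.
  intros Hmu; assert (Hb := fbase_bounds mu x Hmu); unfold fcoef, fcoef1, fbase in *.
  auto_derive; [nonzero | field; lra].
Qed.
Lemma is_derive_fcoef1 (mu x : R) :
  - / 4 <= mu <= / 4 -> is_derive (fcoef1 mu) x (fcoef2 mu x).
Proof.
  intros Hmu; assert (Hb := fbase_bounds mu x Hmu); unfold fcoef1, fcoef2, fbase in *.
  auto_derive; [nonzero | field; lra].
Qed.
Lemma is_derive_fcoef2 (mu x : R) :
  - / 4 <= mu <= / 4 -> is_derive (fcoef2 mu) x (fcoef3 mu x).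
Proof.
  intros Hmu; assert (Hb := fbase_bounds mu x Hmu); unfold fcoef2, fcoef3, fbase in *.
  auto_derive; [nonzero | field; lra].
Qed.
Lemma ex_derive_fcoef3 (mu x : R) : - / 4 <= mu <= / 4 -> ex_derive (fcoef3 mu) x.
Proof.
  intros Hmu; assert (Hb := fbase_bounds mu x Hmu); unfold fcoef3, fbase in *.
  auto_derive; nonzero.
Qed.

Lemma Derive_fcoef (mu x : R) : - / 4 <= mu <= / 4 -> Derive (fcoef mu) x = fcoef1 mu x.
Proof. intros Hmu; exact (is_derive_unique _ _ _ (is_derive_fcoef mu x Hmu)). Qed.
Lemma Derive_fcoef1 (mu x : R) : - / 4 <= mu <= / 4 -> Derive (fcoef1 mu) x = fcoef2 mu x.
Proof. intros Hmu; exact (is_derive_unique _ _ _ (is_derive_fcoef1 mu x Hmu)). Qed.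
Lemma Derive_fcoef2 (mu x : R) : - / 4 <= mu <= / 4 -> Derive (fcoef2 mu) x = fcoef3 mu x.
Proof. intros Hmu; exact (is_derive_unique _ _ _ (is_derive_fcoef2 mu x Hmu)). Qed.
Lemma Derive_gcoef (y : R) : Derive gcoef y = gcoef1 y.
Proof. exact (is_derive_unique _ _ _ (is_derive_gcoef y)). Qed.
Lemma Derive_gcoef1 (y : R) : Derive gcoef1 y = gcoef2 y.
Proof. exact (is_derive_unique _ _ _ (is_derive_gcoef1 y)). Qed.
Lemma Derive_gcoef2 (y : R) : Derive gcoef2 y = gcoef3 y.
Proof. exact (is_derive_unique _ _ _ (is_derive_gcoef2 y)). Qed.

Ltac rewrite_coef_derivatives :=
  rewrite ?Derive_fcoef, ?Derive_fcoef1, ?Derive_fcoef2 by assumption;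
  rewrite ?Derive_gcoef, ?Derive_gcoef1, ?Derive_gcoef2.
Ltac solve_coef_ex_derive :=
  match goal with
  | |- ex_derive (fun s => fcoef ?m s) ?x => exists (fcoef1 m x); now apply is_derive_fcoef
  | |- ex_derive (fun s => fcoef1 ?m s) ?x => exists (fcoef2 m x); now apply is_derive_fcoef1
  | |- ex_derive (fun s => fcoef2 ?m s) ?x => exists (fcoef3 m x); now apply is_derive_fcoef2
  | |- ex_derive (fun s => fcoef3 ?m s) ?x => now apply ex_derive_fcoef3
  | |- ex_derive (fun s => gcoef s) ?y => exists (gcoef1 y); apply is_derive_gcoef
  | |- ex_derive (fun s => gcoef1 s) ?y => exists (gcoef2 y); apply is_derive_gcoef1
  | |- ex_derive (fun s => gcoef2 s) ?y => exists (gcoef3 y); apply is_derive_gcoef2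
  | |- ex_derive (fun s => gcoef3 s) ?y => unfold gcoef3; auto_derive; exact I
  end.
Ltac coef_side_conditions :=
  repeat match goal with
  | |- _ /\ _ => split
  | |- True => exact I
  | |- ex_derive _ _ => solve_coef_ex_derive
  end.

Lemma fcoef_pos (mu x : R) : - / 4 <= mu <= / 4 -> 0 < fcoef mu x.
Proof.
  intros Hmu; assert (Hb := fbase_bounds mu x Hmu); unfold fcoef; apply Rinv_0_lt_compat.
  fold (fbase mu x); nra.
Qed.

Lemma lam_pos (mu x y : R) : - / 4 <= mu <= / 4 -> -1 <= y <= 1 -> 0 < lam mu x y.
Proof.
  intros Hmu Hy; unfold lam.
  assert (H := fcoef_pos mu x Hmu); assert (H' := gcoef_ge0 y Hy); lra.
Qed.

Section Curvature.

Variable mu : R.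
Hypothesis Hmu : - / 4 <= mu <= / 4.

Lemma Derive_ln_lam_x (x y : R) : -1 <= y <= 1 ->
  Derive (fun s => ln (lam mu s y)) x = fcoef1 mu x / lam mu x y.
Proof.
  intros Hy; assert (Hl := lam_pos mu x y Hmu Hy).
  apply is_derive_unique; unfold lam in *.
  auto_derive; [coef_side_conditions; lra | rewrite_coef_derivatives; field; lra].
Qed.

Lemma Derive_ln_lam_y (x y : R) : -1 <= y <= 1 ->
  Derive (fun s => ln (lam mu x s)) y = gcoef1 y / lam mu x y.
Proof.
  intros Hy; assert (Hl := lam_pos mu x y Hmu Hy).
  apply is_derive_unique; unfold lam in *.
  auto_derive; [coef_side_conditions; lra | rewrite_coef_derivatives; field; lra].
Qed.

Lemma Derive2_ln_lam_x (x y : R) : -1 <= y <= 1 ->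
  Derive (fun t => Derive (fun s => ln (lam mu s y)) t) x
  = (fcoef2 mu x * lam mu x y - fcoef1 mu x ^ 2) / lam mu x y ^ 2.
Proof.
  intros Hy; assert (Hl := lam_pos mu x y Hmu Hy).
  rewrite (Derive_ext _ (fun t => fcoef1 mu t / lam mu t y))
    by (intros t; apply Derive_ln_lam_x, Hy).
  apply is_derive_unique; unfold lam in *.
  auto_derive; [coef_side_conditions; lra | rewrite_coef_derivatives; field; lra].
Qed.

(* [lam] is positive only for |y| <= 1, so the closed form of the first y-derivative
   is available only on a neighbourhood of y. *)
Lemma Derive2_ln_lam_y (x y : R) : -1 < y < 1 ->
  Derive (fun t => Derive (fun s => ln (lam mu x s)) t) y
  = (gcoef2 y * lam mu x y - gcoef1 y ^ 2) / lam mu x y ^ 2.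
Proof.
  intros Hy; assert (Hl := lam_pos mu x y Hmu ltac:(lra)).
  rewrite (Derive_ext_loc _ (fun t => gcoef1 t / lam mu x t)).
  2: { apply (locally_interval _ y (-1) 1); simpl; try lra.
       intros t Ht1 Ht2; apply Derive_ln_lam_y; lra. }
  apply is_derive_unique; unfold lam in *.
  auto_derive; [coef_side_conditions; lra | rewrite_coef_derivatives; field; lra].
Qed.

Lemma Kcurv_closed (x y : R) : -1 < y < 1 -> Kcurv mu x y = Kclosed mu x y.
Proof.
  intros Hy; assert (Hl := lam_pos mu x y Hmu ltac:(lra)).
  unfold Kcurv, Kclosed; rewrite Derive2_ln_lam_x, Derive2_ln_lam_y by lra.
  field; lra.
Qed.

Lemma Kx_closed (x y : R) : -1 < y < 1 -> Kx mu x y = Kxclosed mu x y.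
Proof.
  intros Hy; assert (Hl := lam_pos mu x y Hmu ltac:(lra)).
  unfold Kx; rewrite (Derive_ext _ (fun t => Kclosed mu t y))
    by (intros t; apply Kcurv_closed, Hy).
  apply is_derive_unique; unfold Kclosed, Kxclosed, lam in *.
  auto_derive; [coef_side_conditions; nonzero | rewrite_coef_derivatives; field; lra].
Qed.

Lemma Ky_closed (x y : R) : -1 < y < 1 -> Ky mu x y = Kyclosed mu x y.
Proof.
  intros Hy; assert (Hl := lam_pos mu x y Hmu ltac:(lra)).
  unfold Ky; rewrite (Derive_ext_loc _ (fun t => Kclosed mu x t)).
  2: { apply (locally_interval _ y (-1) 1); simpl; try lra.
       intros t Ht1 Ht2; apply Kcurv_closed; lra. }
  apply is_derive_unique; unfold Kclosed, Kyclosed, lam in *.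
  auto_derive; [coef_side_conditions; nonzero | rewrite_coef_derivatives; field; lra].
Qed.

End Curvature.

Lemma Rabs_mult_le (a b A B : R) : Rabs a <= A -> Rabs b <= B -> Rabs (a * b) <= A * B.
Proof. intros; rewrite Rabs_mult; apply Rmult_le_compat; auto using Rabs_pos. Qed.
Lemma Rabs_plus_le (a b A B : R) : Rabs a <= A -> Rabs b <= B -> Rabs (a + b) <= A + B.
Proof. intros; eapply Rle_trans; [apply Rabs_triang | lra]. Qed.
Lemma Rabs_minus_le (a b A B : R) : Rabs a <= A -> Rabs b <= B -> Rabs (a - b) <= A + B.
Proof. intros; eapply Rle_trans; [apply Rabs_triang | rewrite Rabs_Ropp; lra]. Qed.
Lemma Rabs_opp_le (a A : R) : Rabs a <= A -> Rabs (- a) <= A.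
Proof. now rewrite Rabs_Ropp. Qed.
Lemma Rabs_pow_le (a A : R) (n : nat) : Rabs a <= A -> Rabs (a ^ n) <= A ^ n.
Proof. intros; rewrite <- RPow_abs; apply pow_incr; split; auto using Rabs_pos. Qed.
Lemma Rabs_le_nonneg (c : R) : 0 <= c -> Rabs c <= c.
Proof. intros; rewrite Rabs_pos_eq; lra. Qed.
Lemma Rabs_le_nonpos (c : R) : c <= 0 -> Rabs c <= - c.
Proof. intros; rewrite Rabs_left1; lra. Qed.

Ltac bound_Rabs :=
  match goal with
  | |- Rabs (_ * _) <= _ => eapply Rabs_mult_le; [bound_Rabs | bound_Rabs]
  | |- Rabs (_ + _) <= _ => eapply Rabs_plus_le; [bound_Rabs | bound_Rabs]
  | |- Rabs (_ - _) <= _ => eapply Rabs_minus_le; [bound_Rabs | bound_Rabs]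
  | |- Rabs (- _) <= _ => eapply Rabs_opp_le; bound_Rabs
  | |- Rabs (_ ^ _) <= _ => eapply Rabs_pow_le; bound_Rabs
  | |- _ => first [ eassumption | apply Rabs_le_nonneg; lra | apply Rabs_le_nonpos; lra ]
  end.

Section Bounds.

Variable mu : R.
Hypothesis Hmu : - / 4 <= mu <= / 4.

Lemma Rabs_inv_fbase_le (x : R) : Rabs (/ fbase mu x) <= 4 / 3.
Proof.
  assert (Hb := fbase_bounds mu x Hmu).
  rewrite Rabs_pos_eq by (left; apply Rinv_0_lt_compat; lra).
  replace (4 / 3) with (/ (3 / 4)) by field; apply Rinv_le_contravar; lra.
Qed.

Ltac trig_bounds x :=
  assert (Hsin : Rabs (sin x) <= 1) by (apply Rabs_le, SIN_bound);
  assert (Hcos : Rabs (cos x) <= 1) by (apply Rabs_le, COS_bound);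
  assert (Hinv := Rabs_inv_fbase_le x);
  assert (Hmu' : Rabs mu <= / 4) by (apply Rabs_le; lra);
  assert (Hb := fbase_bounds mu x Hmu).

Lemma Rabs_fcoef1_le (x : R) : Rabs (fcoef1 mu x) <= 6 / 5.
Proof.
  trig_bounds x; unfold fcoef1.
  eapply Rle_trans; [bound_Rabs | lra].
Qed.

Lemma Rabs_fcoef2_le (x : R) : Rabs (fcoef2 mu x) <= 12 / 5.
Proof.
  trig_bounds x; unfold fcoef2.
  eapply Rle_trans; [bound_Rabs | lra].
Qed.

Lemma Rabs_fcoef3_le (x : R) : Rabs (fcoef3 mu x) <= 32 / 5.
Proof.
  trig_bounds x; unfold fcoef3.
  eapply Rle_trans; [bound_Rabs | lra].
Qed.

Lemma Rabs_fcoef_le (x : R) : Rabs (fcoef mu x) <= 16 / 9.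
Proof.
  trig_bounds x; unfold fcoef; fold (fbase mu x).
  rewrite <- pow_inv; replace (16 / 9) with ((4 / 3) ^ 2) by field.
  bound_Rabs.
Qed.

Lemma Rabs_inv_lam_le (x y : R) : -1 <= y <= 1 -> Rabs (/ lam mu x y) <= 25 / 16.
Proof.
  intros Hy; assert (Hl := lam_pos mu x y Hmu Hy); assert (Hg := gcoef_ge0 y Hy).
  assert (Hb := fbase_bounds mu x Hmu).
  rewrite Rabs_pos_eq by (left; apply Rinv_0_lt_compat; lra).
  replace (25 / 16) with (/ (16 / 25)) by field; apply Rinv_le_contravar; [lra |].
  unfold lam, fcoef; fold (fbase mu x).
  assert (/ fbase mu x ^ 2 >= / (5 / 4) ^ 2); [| lra].
  apply Rle_ge, Rinv_le_contravar; [apply pow_lt; lra | apply pow_incr; lra].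
Qed.

Lemma Rabs_Kxclosed_le (x y : R) : 0 < y <= 1 / 2 -> Rabs (Kxclosed mu x y) <= 66.
Proof.
  intros Hy; assert (Hl := lam_pos mu x y Hmu ltac:(lra)).
  assert (Hu := Rabs_inv_lam_le x y ltac:(lra)).
  assert (H1 := Rabs_fcoef1_le x); assert (H2 := Rabs_fcoef2_le x);
  assert (H3 := Rabs_fcoef3_le x).
  assert (HG1 : Rabs (gcoef1 y) <= 1) by (unfold gcoef1; apply Rabs_le; nra).
  assert (HG2 : Rabs (gcoef2 y) <= 2) by (unfold gcoef2; apply Rabs_le; nra).
  unfold Kxclosed.
  eapply Rle_trans; [bound_Rabs | lra].
Qed.

Lemma Rabs_Kyclosed_le (x y : R) : 0 < y <= 1 / 2 -> Rabs (Kyclosed mu x y) <= 122 * y.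
Proof.
  intros Hy; assert (Hl := lam_pos mu x y Hmu ltac:(lra)).
  assert (Hu := Rabs_inv_lam_le x y ltac:(lra)).
  assert (H1 := Rabs_fcoef1_le x); assert (H2 := Rabs_fcoef2_le x).
  assert (HG1 : Rabs (gcoef1 y) <= 2 * y) by (unfold gcoef1; apply Rabs_le; nra).
  assert (HG2 : Rabs (gcoef2 y) <= 2) by (unfold gcoef2; apply Rabs_le; nra).
  assert (HG3 : Rabs (gcoef3 y) <= 24 * y) by (unfold gcoef3; apply Rabs_le; nra).
  unfold Kyclosed.
  eapply Rle_trans; [bound_Rabs | nra].
Qed.

End Bounds.

Lemma exp_le_mono (x y : R) : x <= y -> exp x <= exp y.
Proof. intros [H | ->]; [left; apply exp_increasing, H | apply Rle_refl]. Qed.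

Definition dgam (s : R) : R := - (exp s - exp (- s)) / (exp s + exp (- s)) ^ 2.

Lemma gam_eq (s : R) : gam s = / (exp s + exp (- s)).
Proof.
  unfold gam, sech; assert (Hp := exp_pos s); assert (Hm := exp_pos (- s)).
  field; lra.
Qed.

Lemma exp_mul_exp_opp (s : R) : exp s * exp (- s) = 1.
Proof. rewrite <- exp_plus, Rplus_opp_r; apply exp_0. Qed.

Lemma is_derive_gam (s : R) : is_derive gam s (dgam s).
Proof.
  unfold gam, sech, dgam; assert (Hp := exp_pos s); assert (Hm := exp_pos (- s)).
  auto_derive; [lra | field; lra].
Qed.

Lemma exp_plus_exp_opp_ge (s : R) : 2 <= exp s + exp (- s).
Proof.
  assert (HA := exp_pos s); assert (HB := exp_pos (- s)); assert (HAB := exp_mul_exp_opp s).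
  assert (Hsq := Rle_0_sqr (exp s - exp (- s))); unfold Rsqr in Hsq; nra.
Qed.

Lemma gam_pos_le_half (s : R) : 0 < gam s <= 1 / 2.
Proof.
  rewrite gam_eq; assert (H := exp_plus_exp_opp_ge s); split.
  - apply Rinv_0_lt_compat; lra.
  - replace (1 / 2) with (/ 2) by field; apply Rinv_le_contravar; lra.
Qed.

Lemma gam_le_exp_neg_abs (s : R) : gam s <= exp (- Rabs s).
Proof.
  rewrite gam_eq; assert (HA := exp_pos s); assert (HB := exp_pos (- s)).
  assert (HAB := exp_mul_exp_opp s).
  destruct (Rle_dec 0 s) as [Hs | Hs].
  - rewrite Rabs_pos_eq by exact Hs.
    apply Rmult_le_reg_l with (exp s + exp (- s)); [lra |]; rewrite Rinv_r by lra; nra.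
  - rewrite Rabs_left1, Ropp_involutive by lra.
    apply Rmult_le_reg_l with (exp s + exp (- s)); [lra |]; rewrite Rinv_r by lra; nra.
Qed.

Lemma exp_neg_le_twice_gam (s : R) : 0 <= s -> exp (- s) <= 2 * gam s.
Proof.
  intros Hs; rewrite gam_eq; assert (HA := exp_pos s); assert (HB := exp_pos (- s)).
  assert (Hle : exp (- s) <= exp s) by (apply exp_le_mono; lra).
  apply Rmult_le_reg_l with (exp s + exp (- s)); [lra |].
  replace ((exp s + exp (- s)) * (2 * / (exp s + exp (- s)))) with 2 by (field; lra).
  assert (HAB := exp_mul_exp_opp s); nra.
Qed.

Lemma Rabs_dgam_le (s : R) : Rabs (dgam s) <= gam s.
Proof.
  rewrite gam_eq; unfold dgam.
  assert (HA := exp_pos s); assert (HB := exp_pos (- s)); assert (HAB := exp_mul_exp_opp s).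
  assert (Hsq : 0 < (exp s + exp (- s)) ^ 2) by (apply pow_lt; lra).
  rewrite Rabs_div, Rabs_Ropp, (Rabs_pos_eq (_ ^ 2)) by lra.
  apply Rmult_le_reg_l with ((exp s + exp (- s)) ^ 2); [exact Hsq |].
  field_simplify; [apply Rabs_le; split; nra | lra | lra].
Qed.

Lemma exp_half_le : exp (1 / 2) <= 7 / 4.
Proof.
  assert (H : exp (1 / 2) * exp (1 / 2) <= 3).
  { rewrite <- exp_plus; replace (1 / 2 + 1 / 2) with 1 by field; apply exp_le_3. }
  assert (Hp := exp_pos (1 / 2)); nra.
Qed.

Definition phase (mu kappa x : R) : R := kappa + x + mu * sin x.

Section Integrand.

Variables mu kappa : R.
Hypothesis Hmu : - / 4 <= mu <= / 4.

Definition Iclosed (x : R) : R :=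
  let y := ycurve mu kappa x in
  Kxclosed mu x y * gcoef y
  - Kyclosed mu x y * fcoef mu x * (dgam (phase mu kappa x) * fbase mu x).

Lemma is_derive_ycurve (x : R) :
  is_derive (ycurve mu kappa) x (dgam (phase mu kappa x) * fbase mu x).
Proof.
  rewrite Rmult_comm; apply (is_derive_comp gam (phase mu kappa)); [apply is_derive_gam |].
  unfold phase, fbase; auto_derive; [easy | ring].
Qed.

Lemma ycurve_bounds (x : R) : 0 < ycurve mu kappa x <= 1 / 2.
Proof. apply gam_pos_le_half. Qed.

Lemma Iint_closed (x : R) : Iint mu kappa x = Iclosed x.
Proof.
  assert (Hy := ycurve_bounds x).
  unfold Iint, Iclosed; rewrite Kx_closed, Ky_closed by (auto; lra).
  rewrite (is_derive_unique _ _ _ (is_derive_ycurve x)); reflexivity.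
Qed.

Lemma Rabs_Iint_le (x : R) : Rabs (Iint mu kappa x) <= 340 * ycurve mu kappa x ^ 2.
Proof.
  rewrite Iint_closed; unfold Iclosed.
  assert (Hy := ycurve_bounds x).
  assert (Hdy := Rabs_dgam_le (phase mu kappa x)).
  change (gam (phase mu kappa x)) with (ycurve mu kappa x) in Hdy.
  set (y := ycurve mu kappa x) in *.
  assert (HKx := Rabs_Kxclosed_le mu Hmu x y Hy).
  assert (HKy := Rabs_Kyclosed_le mu Hmu x y Hy).
  assert (Hf := Rabs_fcoef_le mu Hmu x).
  assert (Hg : Rabs (gcoef y) <= y ^ 2).
  { rewrite Rabs_pos_eq by (apply gcoef_ge0; lra); unfold gcoef.
    assert (Hy2 : 0 <= y ^ 2) by apply pow2_ge_0; nra. }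
  assert (Hb := fbase_bounds mu x Hmu).
  assert (Hb' : Rabs (fbase mu x) <= 5 / 4) by (apply Rabs_le; lra).
  eapply Rle_trans; [bound_Rabs | nra].
Qed.

Lemma ycurve_le_exp (x : R) : ycurve mu kappa x <= exp (Rabs kappa + / 4) * exp (- Rabs x).
Proof.
  unfold ycurve; fold (phase mu kappa x).
  eapply Rle_trans; [apply gam_le_exp_neg_abs |].
  rewrite <- exp_plus; apply exp_le_mono.
  assert (Hms : Rabs (mu * sin x) <= / 4).
  { rewrite Rabs_mult; assert (Hsin : Rabs (sin x) <= 1) by apply Rabs_le, SIN_bound.
    assert (Hmu' : Rabs mu <= / 4) by (apply Rabs_le; lra).
    assert (H0 := Rabs_pos mu); assert (H1 := Rabs_pos (sin x)); nra. }
  assert (Hx : Rabs x <= Rabs (phase mu kappa x) + Rabs kappa + Rabs (mu * sin x)).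
  { replace x with (phase mu kappa x - kappa - mu * sin x) at 1 by (unfold phase; ring).
    repeat apply Rabs_minus_le; apply Rle_refl. }
  lra.
Qed.

Lemma Rabs_Iint_le_exp (x : R) :
  Rabs (Iint mu kappa x) <= 595 * exp (2 * Rabs kappa) * exp (- (2 * Rabs x)).
Proof.
  assert (Hy := ycurve_bounds x); assert (Hle := ycurve_le_exp x).
  assert (Hsq : ycurve mu kappa x ^ 2
                <= exp (2 * Rabs kappa) * exp (1 / 2) * exp (- (2 * Rabs x))).
  { replace (exp (2 * Rabs kappa) * exp (1 / 2) * exp (- (2 * Rabs x)))
      with ((exp (Rabs kappa + / 4) * exp (- Rabs x)) ^ 2)
      by (simpl; rewrite Rmult_1_r, <- !exp_plus; f_equal; lra).
    apply pow_incr; lra. }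
  assert (Hpos : 0 < exp (2 * Rabs kappa) * exp (- (2 * Rabs x)))
    by (apply Rmult_lt_0_compat; apply exp_pos).
  assert (Hh := exp_half_le).
  eapply Rle_trans; [apply Rabs_Iint_le |]; nra.
Qed.

Lemma continuous_Iint (x : R) : continuous (Iint mu kappa) x.
Proof.
  apply (continuous_ext Iclosed); [intros t; symmetry; apply Iint_closed |].
  apply (ex_derive_continuous (V := R_NormedModule)).
  assert (Hy := ycurve_bounds x).
  assert (Hl := lam_pos mu x (ycurve mu kappa x) Hmu ltac:(lra)).
  assert (Hb := fbase_bounds mu x Hmu).
  assert (HA := exp_pos (phase mu kappa x)); assert (HB := exp_pos (- phase mu kappa x)).
  unfold Iclosed, Kxclosed, Kyclosed, lam, dgam, phase, fbase in *.
  auto_derive; coef_side_conditions; try (eexists; apply is_derive_ycurve); nonzero.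
Qed.

Lemma Iint_right_tail (L : R) :
  exists I, is_RInt_gen (Iint mu kappa) (at_point L) (Rbar_locally p_infty) I /\
            Rabs I <= 595 / 2 * exp (2 * Rabs kappa) * exp (- (2 * L)).
Proof.
  destruct (is_RInt_gen_p_infty_exp_decay (Iint mu kappa) (595 * exp (2 * Rabs kappa)) 2 L)
    as [I [HI Hbound]]; [lra | exact continuous_Iint | |].
  - intros x _; eapply Rle_trans; [apply Rabs_Iint_le_exp |].
    apply Rmult_le_compat_l; [assert (H := exp_pos (2 * Rabs kappa)); lra |].
    apply exp_le_mono; assert (H := Rle_abs x); lra.
  - exists I; split; [exact HI | lra].
Qed.

Lemma Iint_left_tail (L : R) :
  exists I, is_RInt_gen (Iint mu kappa) (Rbar_locally m_infty) (at_point (- L)) I /\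
            Rabs I <= 595 / 2 * exp (2 * Rabs kappa) * exp (- (2 * L)).
Proof.
  destruct (is_RInt_gen_p_infty_exp_decay (fun x => Iint mu kappa (- x))
              (595 * exp (2 * Rabs kappa)) 2 L) as [I [HI Hbound]]; [lra | | |].
  - intros x; apply continuous_comp; [| apply continuous_Iint].
    apply (continuous_opp (V := R_NormedModule) (fun t => t)), continuous_id.
  - intros x _; eapply Rle_trans; [apply Rabs_Iint_le_exp |].
    apply Rmult_le_compat_l; [assert (H := exp_pos (2 * Rabs kappa)); lra |].
    apply exp_le_mono; rewrite Rabs_Ropp; assert (H := Rle_abs x); lra.
  - exists I; split; [| lra].
    apply is_RInt_gen_m_infty_of_reflection; rewrite Ropp_involutive; exact HI.
Qed.

End Integrand.

Lemma exp_neg_twice_le_gam_sq (L : R) : 0 <= L -> exp (- (2 * L)) <= 4 * gam L ^ 2.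
Proof.
  intros HL; replace (- (2 * L)) with (- L + - L) by ring; rewrite exp_plus.
  assert (H := exp_neg_le_twice_gam L HL); assert (Hp := exp_pos (- L)).
  simpl; nra.
Qed.

Theorem mainTheorem9 (mu kappa L : R) :
  0 < mu -> mu < / 4 -> 0 < L ->
  exists I1 I2 : R,
    is_RInt_gen (Iint mu kappa) (Rbar_locally m_infty) (at_point (- L)) I1 /\
    is_RInt_gen (Iint mu kappa) (at_point L) (Rbar_locally p_infty) I2 /\
    Rabs (I1 + I2) <= 1200 * (1 + 2 * exp (2 * Rabs kappa)) * (gam L) ^ 2.
Proof.
  intros Hmu0 Hmu4 HL.
  assert (Hmu : - / 4 <= mu <= / 4) by lra.
  destruct (Iint_left_tail mu kappa Hmu L) as [I1 [HI1 Hbound1]].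
  destruct (Iint_right_tail mu kappa Hmu L) as [I2 [HI2 Hbound2]].
  exists I1, I2; split; [exact HI1 | split; [exact HI2 |]].
  assert (Hgam := exp_neg_twice_le_gam_sq L ltac:(lra)).
  assert (HK := exp_pos (2 * Rabs kappa)); assert (Hg2 := pow2_ge_0 (gam L)).
  eapply Rle_trans; [apply Rabs_triang | nra].
Qed.
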